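(* Let $X$ be a Minkowski space of dimension at least $2$ whose closed unit ball is a polytope with $f$ facets. Then $m(X)\leq f-1$.
   Context: A Minkowski space is a finite-dimensional real normed space $(X,\|\cdot\|)$. For a set $S\subseteq X$, its midpoint set is $M(S)=\{\tfrac12(x+y): x,y\in S,\ x\neq y\}$. A set $S\subseteq X$ is an M-set if every vector in $M(S)$ has norm exactly $1$ and every vector in $S$ has norm strictly greater than $1$. $m(X)$ denotes the largest cardinality of an M-set in $X$ if such a largest finite cardinality exists, and $m(X)=\infty$ otherwise. *)

From Stdlib Require Import Reals List.
From mathcomp Require Import ssreflect ssrbool ssrnat fintype bigop.

Open Scope R_scope.

(* The Minkowski space X of dimension n, realised as R^n with a norm N. *)
Definition vec (n : nat) := 'I_n -> R.

Definition vzero {n : nat} : vec n := fun _ => 0.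
Definition vadd {n : nat} (x y : vec n) : vec n := fun i => x i + y i.
Definition vscale {n : nat} (c : R) (x : vec n) : vec n := fun i => c * x i.
Definition dot {n : nat} (a x : vec n) : R := \big[Rplus/0]_(i < n) (a i * x i).

Definition is_norm {n : nat} (N : vec n -> R) : Prop :=
  (forall x, N x = 0 -> x = vzero) /\
  (forall c x, N (vscale c x) = Rabs c * N x) /\
  (forall x y, N (vadd x y) <= N x + N y).

Definition midpt {n : nat} (x y : vec n) : vec n := vscale (/ 2) (vadd x y).

Definition M_set {n : nat} (N : vec n -> R) (S : vec n -> Prop) : Prop :=
  (forall x y, S x -> S y -> x <> y -> N (midpt x y) = 1) /\
  (forall x, S x -> N x > 1).

(* The closed unit ball {x | N x <= 1} is a polytope with exactly f facets:
   it equals the intersection of f half-spaces {x | <a_i, x> <= 1}, and this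
   representation is irredundant (each inequality cuts off a point that all
   other inequalities admit).  For a full-dimensional polytope with 0 in its
   interior (automatic for a norm ball), the inequalities of an irredundant
   such representation are in bijection with the facets. *)
Definition ball_polytope_facets {n : nat} (N : vec n -> R) (f : nat) : Prop :=
  exists a : nat -> vec n,
    (forall x, N x <= 1 <-> (forall i, (i < f)%nat -> dot (a i) x <= 1)) /\
    (forall i, (i < f)%nat ->
       exists x, dot (a i) x > 1 /\
         (forall j, (j < f)%nat -> j <> i -> dot (a j) x <= 1)).

(* An M-set point of norm > 1 lies beyond some facet of the unit ball, and two
   distinct points of an M-set never lie beyond the same facet, because their
   midpoint is on the unit sphere.  So facets bound the size of an M-set.  To
   save one facet: the ball is centrally symmetric, so every facet F has an
   opposite facet -F, and in dimension >= 2 there are at least three facets.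
   If every facet had a point of the M-set lying beyond it and no other facet,
   take such points x, y, z for F, -F and a third facet G.  Testing the
   midpoints of x, z and of y, z against F and -F bounds how far x and y lie
   beyond F and -F, while the midpoint of x and y, being on the sphere, must
   touch F or -F, which forces one of them to lie further out. *)
From Stdlib Require Import Reals List Lra Classical FunctionalExtensionality.
From HB Require Import structures.
From mathcomp Require Import ssreflect ssrbool ssrnat eqtype fintype bigop zify.

Open Scope R_scope.

HB.instance Definition _ := Monoid.isComLaw.Build R 0 Rplus
  (fun x y z => Logic.eq_sym (Rplus_assoc x y z)) Rplus_comm Rplus_0_l.

Lemma dotDr n (a x y : vec n) : dot a (vadd x y) = dot a x + dot a y.
Proof. by rewrite /dot -big_split /=; apply: eq_bigr => i _; rewrite /vadd; ring. Qed.

Lemma dotZr n (a x : vec n) c : dot a (vscale c x) = c * dot a x.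
Proof. by rewrite /dot /vscale; elim/big_rec2: _ => [|i y1 y2 _ ->]; ring. Qed.

Lemma dot0r n (a : vec n) : dot a vzero = 0.
Proof. by rewrite /dot big1 // => i _; rewrite /vzero; ring. Qed.

Lemma dot_midpt n (a x y : vec n) : dot a (midpt x y) = / 2 * (dot a x + dot a y).
Proof. by rewrite /midpt dotZr dotDr. Qed.

Definition basis_vec {n} (k : 'I_n) : vec n := fun j => if j == k then 1 else 0.

Lemma dot_basis_vec n (a : vec n) k : dot a (basis_vec k) = a k.
Proof.
rewrite /dot (bigD1 k) //= big1 /basis_vec ?eqxx; first ring.
by move=> j /negbTE ->; ring.
Qed.

Lemma exists_orthogonal_nonzero n (a : vec n) :
  (2 <= n)%nat -> exists z, z <> vzero /\ dot a z = 0.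
Proof.
move=> Hn.
have H0 : (0 < n)%nat by lia.
have H1 : (1 < n)%nat by lia.
set o0 := Ordinal H0; set o1 := Ordinal H1.
case: (Req_dec (a o0) 0) => [A0|A0].
  exists (basis_vec o0); split; last by rewrite dot_basis_vec.
  move=> /(f_equal (fun z => z o0)); rewrite /basis_vec /vzero eqxx; lra.
exists (vadd (vscale (a o1) (basis_vec o0)) (vscale (- a o0) (basis_vec o1))).
split; last by rewrite dotDr !dotZr !dot_basis_vec; ring.
by move=> /(f_equal (fun z => z o1)); rewrite /vadd /vscale /basis_vec /vzero /=; lra.
Qed.

Lemma enum_of_injective_cover {A I : Type} (S : A -> Prop) (hit : A -> I -> Prop)
    (idx : list I) :
  (forall x, S x -> exists i, In i idx /\ hit x i) ->
  (forall x y i, S x -> S y -> hit x i -> hit y i -> x = y) ->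
  exists l, NoDup l /\ (forall x, S x <-> In x l) /\ (length l <= length idx)%nat.
Proof.
elim: idx S => [|i idx IH] S Hcov Hinj.
  exists nil; split; first exact: NoDup_nil.
  by split => // x; split => // Sx; have [? []] := Hcov x Sx.
have Hcov' x : S x /\ ~ hit x i -> exists j, In j idx /\ hit x j.
  by move=> [Sx Hx]; have [j [[<-|Hj] Hxj]] := Hcov x Sx; [|exists j].
have Hinj' x y j : S x /\ ~ hit x i -> S y /\ ~ hit y i -> hit x j -> hit y j -> x = y.
  by move=> [Sx _] [Sy _]; apply: Hinj.
have [l [Hl [HSl Hlen]]] := IH _ Hcov' Hinj'.
case: (classic (exists x, S x /\ hit x i)) => [[x [Sx Hx]]|Hnone].
- exists (x :: l); split; [|split; last by rewrite /=; lia].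
  + by apply: NoDup_cons => // /HSl [].
  + move=> y; split; last by case=> [<-|/HSl []].
    move=> Sy; case: (classic (hit y i)) => Hy; first by left; apply: Hinj Hx Hy.
    by right; apply/HSl.
- exists l; split => //; split; last by rewrite /=; lia.
  move=> y; split; last by move=> /HSl [].
  by move=> Sy; apply/HSl; split => // Hy; apply: Hnone; exists y.
Qed.

Definition small_enough (P : R -> Prop) : Prop :=
  exists e0, 0 < e0 /\ forall e, 0 < e <= e0 -> P e.

Lemma small_enough_ex P : small_enough P -> exists e, 0 < e /\ P e.
Proof. by move=> [e0 [He0 HP]]; exists e0; split => //; apply: HP; lra. Qed.

Lemma small_enough_and P Q :
  small_enough P -> small_enough Q -> small_enough (fun e => P e /\ Q e).
Proof.
move=> [e1 [He1 HP]] [e2 [He2 HQ]].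
exists (Rmin e1 e2); split; first exact: Rmin_pos.
move=> e He; have := Rmin_l e1 e2; have := Rmin_r e1 e2.
by split; [apply: HP | apply: HQ]; lra.
Qed.

Lemma small_enough_forall_lt (P : nat -> R -> Prop) m :
  (forall j, (j < m)%nat -> small_enough (P j)) ->
  small_enough (fun e => forall j, (j < m)%nat -> P j e).
Proof.
elim: m => [|m IH] HP.
  by exists 1; split => [|e _ j]; [lra | rewrite ltn0].
have Hm : small_enough (fun e => forall j, (j < m)%nat -> P j e).
  by apply: IH => j Hj; apply: HP; lia.
have [e0 [He0 HPm]] := small_enough_and _ _ Hm (HP m (ltnSn m)).
exists e0; split => // e He j Hj.
have [{}HPm HPme] := HPm e He.
by have [/HPm|->] : (j < m)%nat \/ j = m by lia.
Qed.

Lemma small_enough_mul_le c d : 0 < d -> small_enough (fun e => e * c <= d).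
Proof.
move=> Hd; exists (d / (Rabs c + 1)).
have Hc := Rabs_pos c; have Hcc := RRle_abs c.
have E : d / (Rabs c + 1) * (Rabs c + 1) = d by field; lra.
split; first by apply: Rdiv_lt_0_compat; lra.
move=> e He; nra.
Qed.

Section Norm.
Context {n : nat} {N : vec n -> R} (HN : is_norm N).

Lemma normZ c x : N (vscale c x) = Rabs c * N x.
Proof. by case: HN => _ []. Qed.

Lemma norm0 : N vzero = 0.
Proof.
have -> : (vzero : vec n) = vscale 0 vzero.
  by apply: functional_extensionality => i; rewrite /vscale /vzero; ring.
by rewrite normZ Rabs_R0 Rmult_0_l.
Qed.

Lemma normN x : N (vscale (-1) x) = N x.
Proof. by rewrite normZ Rabs_Ropp Rabs_R1 Rmult_1_l. Qed.

Lemma norm_gt0 x : x <> vzero -> 0 < N x.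
Proof.
move=> Hx; case: HN => Hdef [_ Htri].
have H0 : 0 <= N x.
  have := Htri x (vscale (-1) x).
  have -> : vadd x (vscale (-1) x) = vzero.
    by apply: functional_extensionality => i; rewrite /vadd /vscale /vzero; ring.
  rewrite norm0 normN; lra.
have [//|E] := Rle_lt_or_eq_dec _ _ H0.
by case: Hx; apply: Hdef.
Qed.

End Norm.

Section Polytope.
Context {n : nat} {N : vec n -> R} (HN : is_norm N) {f : nat} {a : nat -> vec n}.
Hypothesis Hball : forall x, N x <= 1 <-> (forall i, (i < f)%nat -> dot (a i) x <= 1).
Hypothesis Hirr : forall i, (i < f)%nat ->
  exists x, dot (a i) x > 1 /\ (forall j, (j < f)%nat -> j <> i -> dot (a j) x <= 1).

Lemma norm_le_iff c x :
  0 < c -> N x <= c <-> (forall i, (i < f)%nat -> dot (a i) x <= c).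
Proof.
move=> Hc.
have Hic : 0 < / c by apply: Rinv_0_lt_compat.
have Ec : / c * c = 1 by apply: Rinv_l; lra.
have Hdiv u : / c * u <= 1 <-> u <= c by split => ?; nra.
rewrite -Hdiv -(Rabs_pos_eq (/ c)) -?(normZ HN) ?Hball; last lra.
by split => H i /H; rewrite dotZr Hdiv.
Qed.

Lemma dot_le_norm i x : (i < f)%nat -> dot (a i) x <= N x.
Proof.
move=> Hi; case: (classic (x = vzero)) => [->|Hx].
  by rewrite dot0r (norm0 HN); lra.
exact: (proj1 (norm_le_iff _ x (norm_gt0 HN _ Hx)) (Rle_refl _) i Hi).
Qed.

Lemma exists_tight_facet x :
  0 < N x -> exists i, (i < f)%nat /\ N x <= dot (a i) x.
Proof.
move=> Hx; apply: NNPP => Hno.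
have Hlt i : (i < f)%nat -> dot (a i) x < N x.
  by move=> Hi; apply: Rnot_le_lt => Hle; apply: Hno; exists i.
have [e [He [Hgap He2]]] : exists e, 0 < e /\
    (forall i, (i < f)%nat -> e * 1 <= N x - dot (a i) x) /\ e * 1 <= N x / 2.
  apply/small_enough_ex/small_enough_and; last by apply: small_enough_mul_le; lra.
  by apply: small_enough_forall_lt => i Hi; apply: small_enough_mul_le; have := Hlt i Hi; lra.
have : N x <= N x - e.
  by apply/norm_le_iff => [|i Hi]; [lra | have := Hgap i Hi; lra].
lra.
Qed.

Lemma no_recession_direction z :
  z <> vzero -> (forall i, (i < f)%nat -> dot (a i) z <= 0) -> False.
Proof.
move=> Hz H; have Hp := norm_gt0 HN _ Hz.
have : N z <= N z / 2 by apply/norm_le_iff => [|i /H]; lra.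
lra.
Qed.

Lemma facet_relint_point i : (i < f)%nat ->
  exists p, dot (a i) p = 1 /\ forall j, (j < f)%nat -> j <> i -> dot (a j) p < 1.
Proof.
move=> Hi; have [w [Hw Hwj]] := Hirr i Hi.
have E : / dot (a i) w * dot (a i) w = 1 by apply: Rinv_l; lra.
have Hinv : 0 < / dot (a i) w by apply: Rinv_0_lt_compat; lra.
exists (vscale (/ dot (a i) w) w); split => [|j Hj Hji]; rewrite dotZr //.
have := Hwj j Hj Hji; nra.
Qed.

Lemma norm_near_facet i p v : (i < f)%nat ->
  dot (a i) p = 1 -> (forall j, (j < f)%nat -> j <> i -> dot (a j) p < 1) ->
  exists e, 0 < e /\ N (vadd p (vscale e v)) <= 1 + e * dot (a i) v.
Proof.
move=> Hi Hpi Hpj.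
have [e [He [Hj Hpos]]] : exists e, 0 < e /\
    (forall j, (j < f)%nat -> j <> i ->
       e * (dot (a j) v - dot (a i) v) <= 1 - dot (a j) p) /\
    e * (- dot (a i) v) <= / 2.
  apply/small_enough_ex/small_enough_and; last by apply: small_enough_mul_le; lra.
  apply: small_enough_forall_lt => j Hjf.
  case: (classic (j = i)) => [->|Hji]; first by exists 1; split => [|e _ []]; [lra |].
  have [e0 [He0 H]] := small_enough_mul_le (dot (a j) v - dot (a i) v)
                         (1 - dot (a j) p) ltac:(have := Hpj j Hjf Hji; lra).
  by exists e0; split => // e /H.
exists e; split => //.
apply/norm_le_iff => [|j Hjf]; first lra.
rewrite dotDr dotZr.
case: (classic (j = i)) => [->|Hji]; first lra.
have := Hj j Hjf Hji; lra.
Qed.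

(* The facet touching -p, for p interior to facet i, is the opposite of facet i,
   since the norm is even. *)
Lemma opposite_facet i : (i < f)%nat ->
  exists k, (k < f)%nat /\ forall z, dot (a k) z = - dot (a i) z.
Proof.
move=> Hi; have [p [Hpi Hpj]] := facet_relint_point i Hi.
have Np : N p = 1.
  apply: Rle_antisym; last by rewrite -Hpi; apply: dot_le_norm.
  apply/norm_le_iff => [|j Hj]; first lra.
  by case: (classic (j = i)) => [->|Hji]; [lra | apply: Rlt_le; apply: Hpj].
have [k [Hk Htight]] := exists_tight_facet (vscale (-1) p) ltac:(rewrite (normN HN); lra).
have Hkp : dot (a k) p = -1.
  have := dot_le_norm k (vscale (-1) p) Hk.
  by move: Htight; rewrite (normN HN) !dotZr Np; lra.
have Hsum v : 0 <= dot (a i) v + dot (a k) v.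
  have [e [He Hq]] := norm_near_facet i p v Hi Hpi Hpj.
  have := dot_le_norm k (vscale (-1) (vadd p (vscale e v))) Hk.
  rewrite (normN HN) dotZr dotDr dotZr Hkp; nra.
exists k; split => // z.
have := Hsum z; have := Hsum (vscale (-1) z); rewrite !dotZr; lra.
Qed.

Lemma three_le_facets : (2 <= n)%nat -> (3 <= f)%nat.
Proof.
move=> Hn; have [z [Hz0 Hz]] := exists_orthogonal_nonzero _ (a 0%nat) Hn.
have [//|Hf2] := ltnP 2 f.
exfalso; apply: (no_recession_direction z Hz0) => l Hl.
have Hf0 : (0 < f)%nat by lia.
have [k [Hk Hopp]] := opposite_facet 0 Hf0.
have [p [Hp _]] := facet_relint_point 0 Hf0.
have Hk0 : k <> 0%nat by move=> E; have := Hopp p; rewrite E Hp; lra.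
have [->|->] : l = 0%nat \/ l = k by lia.
- by rewrite Hz; lra.
- by rewrite Hopp Hz; lra.
Qed.

End Polytope.

Definition beyond_facet {n} (f : nat) (a : nat -> vec n) (x : vec n) (i : nat) : Prop :=
  (i < f)%nat /\ 1 < dot (a i) x.

Section MSet.
Context {n : nat} {N : vec n -> R} (HN : is_norm N) {f : nat} {a : nat -> vec n}.
Hypothesis Hball : forall x, N x <= 1 <-> (forall i, (i < f)%nat -> dot (a i) x <= 1).
Hypothesis Hirr : forall i, (i < f)%nat ->
  exists x, dot (a i) x > 1 /\ (forall j, (j < f)%nat -> j <> i -> dot (a j) x <= 1).
Context {S : vec n -> Prop} (HS : M_set N S).

Lemma M_set_midpt_dot_le x y i : S x -> S y -> x <> y -> (i < f)%nat ->
  dot (a i) x + dot (a i) y <= 2.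
Proof.
move=> Sx Sy Hxy Hi.
have := dot_le_norm HN Hball i (midpt x y) Hi.
rewrite (proj1 HS x y Sx Sy Hxy) dot_midpt; lra.
Qed.

Lemma M_set_beyond_facet x : S x -> exists i, beyond_facet f a x i.
Proof.
move=> Sx; have Hx := proj2 HS x Sx.
have [i [Hi Ht]] := exists_tight_facet HN Hball x ltac:(lra).
by exists i; split => //; lra.
Qed.

Lemma M_set_dot_lt1 x y i : S x -> S y -> x <> y -> beyond_facet f a y i ->
  dot (a i) x < 1.
Proof. by move=> Sx Sy Hxy [Hi Hy]; have := M_set_midpt_dot_le x y i Sx Sy Hxy Hi; lra. Qed.

Lemma M_set_beyond_facet_inj x y i : S x -> S y ->
  beyond_facet f a x i -> beyond_facet f a y i -> x = y.
Proof.
move=> Sx Sy [_ Hx] Hy; apply: NNPP => Hxy.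
by have := M_set_dot_lt1 x y i Sx Sy Hxy Hy; lra.
Qed.

Lemma not_all_facets_exclusive : (3 <= f)%nat ->
  ~ (forall i, (i < f)%nat -> exists x, S x /\ beyond_facet f a x i /\
       forall j, beyond_facet f a x j -> j = i).
Proof.
move=> Hf Hall.
have [k [Hk Hopp]] := opposite_facet HN Hball Hirr 0 ltac:(lia).
have [x [Sx [[_ Hx] Hxo]]] := Hall 0%nat ltac:(lia).
have Hk0 : k <> 0%nat by move=> E; have := Hopp x; rewrite E; lra.
have [y [Sy [[_ Hy] Hyo]]] := Hall k Hk.
set j := if k == 1%nat then 2%nat else 1%nat.
have [Hj Hj0 Hjk] : [/\ (j < f)%nat, j <> 0%nat & j <> k].
  by rewrite /j; case: eqP; split; lia.
have [z [Sz [Hz Hzo]]] := Hall j Hj.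
have Hxy : x <> y by move=> E; apply: Hk0; apply: Hxo; rewrite E.
have Hxz : x <> z by move=> E; apply: Hj0; apply: Hxo; rewrite E.
have Hyz : y <> z by move=> E; apply: Hjk; apply: Hyo; rewrite E.
(* The third point z bounds how far x and y lie beyond the opposite facets. *)
have Hxy4 : dot (a 0%nat) x + dot (a k) y <= 4.
  have := M_set_midpt_dot_le x z 0 Sx Sz Hxz ltac:(lia).
  have := M_set_midpt_dot_le y z k Sy Sz Hyz Hk.
  have := Hopp z; lra.
have Hmid : 0 < N (midpt x y) by rewrite (proj1 HS x y Sx Sy Hxy); lra.
have [l [Hl]] := exists_tight_facet HN Hball (midpt x y) Hmid.
rewrite (proj1 HS x y Sx Sy Hxy) dot_midpt => Htight.
case: (classic (l = 0%nat)) => [El|Hl0].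
  by move: Htight; rewrite El; have := Hopp y; lra.
case: (classic (l = k)) => [El|Hlk].
  by move: Htight; rewrite El; have := Hopp x; lra.
have [w [Sw [Hw Hwo]]] := Hall l Hl.
have Hxw : x <> w by move=> E; apply: Hl0; apply: Hxo; rewrite E.
have Hyw : y <> w by move=> E; apply: Hlk; apply: Hyo; rewrite E.
have := M_set_dot_lt1 x w l Sx Sw Hxw Hw.
have := M_set_dot_lt1 y w l Sy Sw Hyw Hw.
lra.
Qed.

Lemma M_set_redundant_facet : (3 <= f)%nat ->
  exists i0, (i0 < f)%nat /\
    forall x, S x -> exists i, beyond_facet f a x i /\ i <> i0.
Proof.
move=> Hf; apply: NNPP => Hno; apply: (not_all_facets_exclusive Hf) => i Hi.
apply: NNPP => Hnx; apply: Hno; exists i; split => // x Sx.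
apply: NNPP => Hx; apply: Hnx; exists x.
have Honly j : beyond_facet f a x j -> j = i.
  by move=> Hj; apply: NNPP => Hji; apply: Hx; exists j.
have [j Hj] := M_set_beyond_facet x Sx.
by split; [|split]; [ | rewrite -(Honly j Hj) |].
Qed.

End MSet.

Theorem mainTheorem16 (n : nat) (N : vec n -> R) (f : nat) :
  (2 <= n)%nat ->
  is_norm N ->
  ball_polytope_facets N f ->
  forall S : vec n -> Prop, M_set N S ->
    exists l : list (vec n),
      NoDup l /\ (forall x, S x <-> In x l) /\ (length l <= f - 1)%nat.
Proof.
move=> Hn HN [a [Hball Hirr]] S HS.
have Hf := three_le_facets HN Hball Hirr Hn.
have [i0 [Hi0 Hcov]] := M_set_redundant_facet HN Hball Hirr HS Hf.
set idx := List.seq 0 i0 ++ List.seq i0.+1 (f - i0.+1).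
have Hidx x : S x -> exists i, In i idx /\ beyond_facet f a x i.
  move=> /Hcov [i [[Hi Hx] Hii0]]; exists i.
  by split; [apply/in_app_iff; rewrite !in_seq; lia | split].
have [l [Hl [HSl Hlen]]] :=
  enum_of_injective_cover S _ idx Hidx (M_set_beyond_facet_inj HN Hball HS).
exists l; split=> //; split=> //.
by move: Hlen; rewrite length_app !length_seq; lia.
Qed.
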